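(* Let $0<\varepsilon\le1$ and let $\vec U\in V_{\mathrm{per}}(\Omega^\varepsilon)$ and $P\in L^2(\Omega^\varepsilon)$ satisfy, for constants $C_1,C_2$ independent of $\varepsilon$, (i) $\|\operatorname{div}\vec U\|_{L^2(\Omega^\varepsilon)}\le C_1\varepsilon^{5/2}$, and (ii) for all $\vec\varphi\in V_{\mathrm{per}}(\Omega^\varepsilon)$: $$\Big|\int_{\Omega^\varepsilon}\nabla\vec U:\nabla\vec\varphi-\int_{\Omega^\varepsilon}P\,\operatorname{div}\vec\varphi\Big|\le C_2\varepsilon^{3/2}\big(\|\nabla\vec\varphi\|_{L^2(\Omega^\varepsilon)^4}+\|\vec\varphi\|_{H^1(\Omega_{\mathrm{ff}})^2}\big).$$ Then there is a constant $C$ (depending only on $C_1,C_2$) such that $$\|\nabla\vec U\|^2_{L^2(\Omega^\varepsilon)^4}\le C\varepsilon^{5/2}\|P\|_{L^2(\Omega^\varepsilon)}+C\varepsilon^{3/2}\big(\|\nabla\vec U\|_{L^2(\Omega^\varepsilon_{\mathrm{pm}})^4}+\|\vec U\|_{H^1(\Omega_{\mathrm{ff}})^2}\big).$$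
   Context: Two-dimensional setting with scale parameter $\varepsilon=\ell/L$. The pore-scale flow domain is $\Omega^\varepsilon=\Omega_{\mathrm{ff}}\cup\Sigma\cup\Omega^\varepsilon_{\mathrm{pm}}$, where $\Omega_{\mathrm{ff}}=(0,L)\times(0,h)$ is the free-flow region, $\Sigma=(0,L)\times\{0\}$ the interface, and $\Omega^\varepsilon_{\mathrm{pm}}$ is the fluid part of the porous region $(0,L)\times(-H,0)$, obtained by periodic repetition of $\varepsilon$-scaled unit cells $\varepsilon Y$ containing a solid inclusion $\varepsilon Y_s$ strictly inside each cell. The test space is $V_{\mathrm{per}}(\Omega^\varepsilon)=\{\vec\phi\in H^1(\Omega^\varepsilon)^2:\ \vec\phi=\vec0$ on the boundaries of the solid inclusions, $\vec\phi=\vec 0$ on $\{x_2=h\}$, $\phi_2=0$ on $\{x_2=-H\}$, $\vec\phi$ is $L$-periodic in $x_1\}$. In the paper, $(\vec U,P)$ is the pair $(\vec U^{6,\varepsilon},P^{6,\varepsilon})$ of velocity and pressure errors between the pore-scale Stokes solution and the constructed multiscale approximation, for which (i) and (ii) are the conclusions of Corollaries 3.3 and 3.4. *)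

From HB Require Import structures.
From mathcomp Require Import all_boot all_order all_algebra.
From mathcomp Require Import all_classical all_reals all_analysis.
Set Implicit Arguments. Unset Strict Implicit. Unset Printing Implicit Defensive.
Import Order.TTheory GRing.Theory Num.Theory numFieldNormedType.Exports.
Local Open Scope classical_set_scope.
Local Open Scope ring_scope.

Section Defs.
Variable R : realType.

Definition pt := (R * R)%type.

Definition leb2 := ((@lebesgue_measure R) \x (@lebesgue_measure R))%E.

Definition rint (D : set pt) (f : pt -> R) : R :=
  fine (\int[leb2]_(x in D) (f x)%:E)%E.

Definition L2 (D : set pt) (f : pt -> R) : Prop :=
  measurable_fun D f /\ leb2.-integrable D (fun x => (f x ^+ 2)%:E).

Definition L2norm (D : set pt) (f : pt -> R) : R :=
  Num.sqrt (rint D (fun x => f x ^+ 2)).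

Definition ev (j : 'I_2) : pt := if j == ord0 then (1, 0) else (0, 1).
Definition i1 : 'I_2 := @Ordinal 2 1 isT.

Definition iterD (vs : seq pt) (f : pt -> R) : pt -> R :=
  foldr (fun v g => 'D_v g) f vs.
Definition smooth (f : pt -> R) : Prop :=
  forall vs : seq pt, continuous (iterD vs f) /\
    forall (x v : pt), derivable (iterD vs f) x v.

Definition test_fun (O : set pt) (psi : pt -> R) : Prop :=
  smooth psi /\ exists K : set pt, [/\ compact K, K `<=` O &
    forall x, ~ K x -> psi x = 0].

Definition weak_grad (O : set pt) (u : pt -> R) (g : 'I_2 -> pt -> R) : Prop :=
  forall psi, test_fun O psi -> forall j : 'I_2,
    (\int[leb2]_(x in O) (u x * 'D_(ev j) psi x)%:E
     = - \int[leb2]_(x in O) (g j x * psi x)%:E)%E.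

Definition H1 (O : set pt) (u : pt -> R) (g : 'I_2 -> pt -> R) : Prop :=
  [/\ L2 O u, forall j, L2 O (g j) & weak_grad O u g].

(* vector fields U : 'I_2 -> pt -> R with gradients DU i j = d_j U_i *)
Definition H1v (O : set pt) (U : 'I_2 -> pt -> R)
  (DU : 'I_2 -> 'I_2 -> pt -> R) : Prop := forall i, H1 O (U i) (DU i).

Definition grad_norm (D : set pt) (DU : 'I_2 -> 'I_2 -> pt -> R) : R :=
  Num.sqrt (rint D (fun x => \sum_(i < 2) \sum_(j < 2) DU i j x ^+ 2)).

Definition H1v_norm (D : set pt) (U : 'I_2 -> pt -> R)
  (DU : 'I_2 -> 'I_2 -> pt -> R) : R :=
  Num.sqrt (rint D (fun x => \sum_(i < 2) U i x ^+ 2 +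
                             \sum_(i < 2) \sum_(j < 2) DU i j x ^+ 2)).

Definition divg (DU : 'I_2 -> 'I_2 -> pt -> R) (x : pt) : R :=
  DU ord0 ord0 x + DU i1 i1 x.

Definition gradprod (DU DV : 'I_2 -> 'I_2 -> pt -> R) (x : pt) : R :=
  \sum_(i < 2) \sum_(j < 2) DU i j x * DV i j x.

Definition frac (r : R) : R := r - (Num.floor r)%:~R.

(* position inside the unit cell Y = [0,1)^2 of the eps-cell containing x *)
Definition cellpos (eps : R) (x : pt) : pt := (frac (x.1 / eps), frac (x.2 / eps)).

Definition Omega_ff (L h : R) : set pt :=
  [set x | 0 < x.1 < L /\ 0 < x.2 < h].
Definition Sigma (L : R) : set pt := [set x | 0 < x.1 < L /\ x.2 = 0].
(* fluid part of the porous region (0,L) x (-H,0) *)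
Definition Omega_pm (L H eps : R) (Ys : set pt) : set pt :=
  [set x | 0 < x.1 < L /\ - H < x.2 < 0 /\ ~ Ys (cellpos eps x)].
Definition Omega_eps (L h H eps : R) (Ys : set pt) : set pt :=
  Omega_ff L h `|` Sigma L `|` Omega_pm L H eps Ys.

Definition Vsmooth (L h H eps : R) (Ys : set pt) (phi : 'I_2 -> pt -> R) : Prop :=
  [/\ forall i, smooth (phi i),
      forall i x, phi i (x.1 + L, x.2) = phi i x,
      forall i x1, phi i (x1, h) = 0,
      forall x1, phi i1 (x1, - H) = 0
    & forall i x, 0 <= x.1 <= L -> - H <= x.2 <= 0 ->
        (Ys `\` interior Ys) (cellpos eps x) -> phi i x = 0]. (* phi = 0 on inclusion boundaries *)

(* V_per(Omega^eps): H^1 closure of the smooth admissible fields *)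
Definition Vper (L h H eps : R) (Ys : set pt) (U : 'I_2 -> pt -> R)
    (DU : 'I_2 -> 'I_2 -> pt -> R) : Prop :=
  H1v (Omega_eps L h H eps Ys) U DU /\
  exists phin : nat -> 'I_2 -> pt -> R,
    (forall n, Vsmooth L h H eps Ys (phin n)) /\
    (fun n => H1v_norm (Omega_eps L h H eps Ys)
                (fun i x => phin n i x - U i x)
                (fun i j x => 'D_(ev j) (phin n i) x - DU i j x)) @ \oo --> (0 : R).

End Defs.

From Pilot Require Import Defs.
From HB Require Import structures.
From mathcomp Require Import all_boot all_order all_algebra.
From mathcomp Require Import all_classical all_reals all_analysis.
From mathcomp Require Import lra ring.
Import Order.TTheory GRing.Theory Num.Theory numFieldNormedType.Exports.
Local Open Scope classical_set_scope.
Local Open Scope ring_scope.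
Set Implicit Arguments. Unset Strict Implicit. Unset Printing Implicit Defensive.

(* Test the variational inequality (ii) with phi = U itself.  Its left-hand
   side becomes ||grad U||^2 - int P div U, and Cauchy-Schwarz together with
   the divergence bound (i) controls int P div U by C1 eps^(5/2) ||P||.  On the
   right-hand side, Omega^eps is Omega_ff, the null interface Sigma and
   Omega_pm, so ||grad U||_{Omega^eps} <= ||grad U||_{Omega_pm} + ||U||_{H^1(Omega_ff)}. *)

Lemma sqrtrD_le (R : rcfType) (x y : R) : 0 <= x -> 0 <= y ->
  Num.sqrt (x + y) <= Num.sqrt x + Num.sqrt y.
Proof.
move=> x0 y0; rewrite -[leRHS]ger0_norm ?addr_ge0 ?sqrtr_ge0 //.
rewrite -sqrtr_sqr ler_sqrt ?sqr_ge0 // sqrrD !sqr_sqrtr //.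
have := mulr_ge0 (sqrtr_ge0 x) (sqrtr_ge0 y); lra.
Qed.

Lemma discriminant_le0 (R : realFieldType) (a b c : R) : 0 <= a ->
  (forall s, 0 <= a * s ^+ 2 + 2 * b * s + c) -> b ^+ 2 <= a * c.
Proof.
rewrite le_eqVlt => /predU1P[<-|a_gt0] q_ge0.
  have [->|b_neq0] := eqVneq b 0; first by rewrite expr0n mul0r.
  have := q_ge0 (- (c + 1) / (2 * b)).
  have -> : 2 * b * (- (c + 1) / (2 * b)) = - (c + 1) by field.
  rewrite mul0r; lra.
have := q_ge0 (- b / a).
have -> : a * (- b / a) ^+ 2 + 2 * b * (- b / a) + c = c - b ^+ 2 / a.
  by field; rewrite gt_eqF.
by rewrite subr_ge0 ler_pdivrMr // mulrC.
Qed.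

Lemma energy_bound (R : realDomainType) (c1 c2 e3 e5 p g gpm hf b : R) :
  0 <= e3 -> 0 <= e5 -> 0 <= p -> 0 <= g -> 0 <= gpm -> 0 <= hf ->
  g ^+ 2 - b <= c2 * e3 * (g + hf) -> `|b| <= c1 * e5 * p -> g <= gpm + hf ->
  g ^+ 2 <= (`|c1| + 2 * `|c2|) * e5 * p + (`|c1| + 2 * `|c2|) * e3 * (gpm + hf).
Proof.
move=> e3_ge0 e5_ge0 p_ge0 g_ge0 gpm_ge0 hf_ge0 energy pressure split.
have c2_abs : c2 * e3 * (g + hf) <= `|c2| * e3 * (g + hf).
  by rewrite -!mulrA ler_wpM2r ?mulr_ge0 ?addr_ge0 ?ler_norm.
have c2_split : `|c2| * e3 * (g + hf) <= `|c2| * e3 * (2 * (gpm + hf)).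
  by rewrite ler_wpM2l ?mulr_ge0 //; lra.
have c1_abs : c1 * e5 * p <= `|c1| * e5 * p.
  by rewrite -!mulrA ler_wpM2r ?mulr_ge0 ?ler_norm.
have : 0 <= `|c1| * e3 * (gpm + hf) by rewrite !mulr_ge0 ?addr_ge0.
have : 0 <= 2 * `|c2| * e5 * p by rewrite !mulr_ge0.
have := ler_norm b; lra.
Qed.

Section Borel_pair.
Variable R : realType.

Definition rat_box (q : (rat * rat) * (rat * rat)) : set (pt R) :=
  `](ratr q.1.1 : R), ratr q.1.2[ `*` `](ratr q.2.1 : R), ratr q.2.2[.

(* An open set of R * R is the countable union of the rational boxes it contains. *)
Lemma open_measurable_pair (O : set (pt R)) : open O -> measurable O.
Proof.
move=> oO.
have -> : O = \bigcup_q (if `[< rat_box q `<=` O >] then rat_box q else set0).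
  apply/seteqP; split; last by move=> x [q _]; case: asboolP => // qO /qO.
  move=> x Ox; have /nbhs_ballP[e /= e_gt0 xeO] := oO x Ox.
  have rat_near (r : R) : exists2 q : rat * rat, ratr q.1 < r < ratr q.2 &
      r - e < ratr q.1 /\ ratr q.2 < r + e.
    have [a /[!in_itv]/= /andP[a1 a2]] : exists a : rat, ratr a \in `](r - e), r[.
      by apply: rat_in_itvoo; rewrite ltrBlDr ltrDl.
    have [b /[!in_itv]/= /andP[b1 b2]] : exists b : rat, ratr b \in `]r, (r + e)[.
      by apply: rat_in_itvoo; rewrite ltrDl.
    by exists (a, b); rewrite /= ?a2 ?b1.
  have [[a b] /andP[ax xb] [ae be]] := rat_near x.1.
  have [[c d] /andP[cx xd] [ce de]] := rat_near x.2.
  exists ((a, b), (c, d)) => //=.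
  case: asboolP => [_|]; first by split; rewrite /= in_itv /= ?ax ?xb ?cx ?xd.
  case=> y [] /=; rewrite !in_itv /= => /andP[y1 y2] /andP[y3 y4].
  by apply: xeO; split; rewrite /ball /= ltr_norml; apply/andP; split; lra.
apply: countable_bigcupT_measurable; first exact: countableP.
by move=> q; case: asboolP => _ //; apply: measurableX; apply: measurable_itv.
Qed.

Lemma measurable_floor : measurable_fun [set: R] (fun r : R => (Num.floor r)%:~R : R).
Proof.
apply: measurable_realfun.nondecreasing_measurable => // x y xy.
by rewrite ler_int le_floor.
Qed.

Lemma measurable_frac_scale (eps : R) : measurable_fun [set: R] (fun r => Defs.frac (r / eps)).
Proof.
apply: measurable_realfun.measurable_funB;
  first exact: measurable_realfun.measurable_funM.
apply: (measurableT_comp measurable_floor).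
exact: measurable_realfun.measurable_funM.
Qed.

Lemma measurable_cellpos (eps : R) : measurable_fun [set: pt R] (cellpos eps).
Proof.
apply: measurable_fun_pair.
  exact: (measurableT_comp (measurable_frac_scale eps) measurable_fst).
exact: (measurableT_comp (measurable_frac_scale eps) measurable_snd).
Qed.

Lemma measurable_Omega_ff (L h : R) : measurable (Omega_ff L h).
Proof.
have -> : Omega_ff L h = `]0, L[ `*` `]0, h[.
  by apply/seteqP; split => x /=; rewrite !in_itv.
by apply: measurableX; apply: measurable_itv.
Qed.

Lemma measurable_Sigma (L : R) : measurable (Sigma L : set (pt R)).
Proof.
have -> : Sigma L = `]0, L[ `*` [set (0 : R)].
  by apply/seteqP; split => x /=; rewrite !in_itv.
by apply: measurableX => //; apply: measurable_itv.
Qed.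

Lemma measurable_Omega_pm (L H eps : R) (Ys : set (pt R)) : closed Ys ->
  measurable (Omega_pm L H eps Ys).
Proof.
move=> cYs.
have -> : Omega_pm L H eps Ys =
    (`]0, L[ `*` `](- H), 0[) `&` (cellpos eps @^-1` (~` Ys)).
  by apply/seteqP; split => x /=; rewrite !in_itv /=; [case=> a [b c]|case=> [[a b] c]].
apply: measurableI; first by apply: measurableX; apply: measurable_itv.
rewrite -[X in measurable X]setTI.
by apply: measurable_cellpos => //; exact: open_measurable_pair (closed_openC cYs).
Qed.

Lemma measurable_Omega_eps (L h H eps : R) (Ys : set (pt R)) : closed Ys ->
  measurable (Omega_eps L h H eps Ys).
Proof.
move=> cYs; apply: measurableU; last exact: measurable_Omega_pm.
by apply: measurableU; [exact: measurable_Omega_ff|exact: measurable_Sigma].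
Qed.

Lemma Sigma_null (L : R) : leb2 (Sigma L : set (pt R)) = 0%E.
Proof.
apply/eqP; rewrite eq_le measure_ge0 andbT.
apply: (@le_trans _ _ (leb2 ([set: R] `*` [set (0 : R)]))).
  by apply: le_measure; rewrite ?inE; [exact: measurable_Sigma|exact: measurableX|move=> x [_ /= ->]].
rewrite /leb2 product_measure1E //.
by rewrite (_ : _ [set 0%R] = 0%E) ?mule0 //; exact: lebesgue_measure_set1.
Qed.

End Borel_pair.

Section L2_space.
Variable R : realType.
Implicit Types (D E : set (pt R)) (f g : pt R -> R).
Local Notation integrable D f := ((@leb2 R).-integrable D (EFin \o f)).

Lemma rintE D f : rint D f = Rintegral (@leb2 R) D f.
Proof. by []. Qed.

Lemma integrableDR D f g : measurable D -> integrable D f -> integrable D g ->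
  integrable D (fun x => f x + g x).
Proof.
move=> mD If Ig.
apply: (@eq_integrable _ _ _ (@leb2 R) D mD (fun x => (f x)%:E + (g x)%:E)%E) => //.
exact: integrableD.
Qed.

Lemma integrableZR D f k : measurable D -> integrable D f ->
  integrable D (fun x => k * f x).
Proof.
move=> mD If.
apply: (@eq_integrable _ _ _ (@leb2 R) D mD (fun x => k%:E * (f x)%:E)%E) => //.
exact: integrableZl.
Qed.

Lemma integrable_sumR D (I : Type) (s : seq I) (F : I -> pt R -> R) :
  measurable D -> (forall i, integrable D (F i)) ->
  integrable D (fun x => \sum_(i <- s) F i x).
Proof.
move=> mD IF; apply: (@eq_integrable _ _ _ (@leb2 R) D mD (fun x => \sum_(i <- s) (F i x)%:E)%E).
  by move=> x _; rewrite /= sumEFin.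
by apply: (@integrable_sum _ _ _ (@leb2 R) D mD I s xpredT) => i _; exact: IF.
Qed.

Lemma L2S D E f : measurable E -> measurable D -> D `<=` E -> L2 E f -> L2 D f.
Proof.
move=> mE mD DE [mf If]; split; first exact: measurable_funS mf.
exact: integrableS If.
Qed.

Lemma L2_integrableM D f g : measurable D -> L2 D f -> L2 D g ->
  integrable D (fun x => f x * g x).
Proof.
move=> mD [mf If] [mg Ig].
have Isum := integrableDR mD If Ig.
apply: (@le_integrable _ _ _ (@leb2 R) D mD _ _ _ _ Isum).
  exact/measurable_realfun.measurable_EFinP/measurable_realfun.measurable_funM.
move=> x _ /=; rewrite lee_fin normrM [leRHS]ger0_norm ?addr_ge0 ?sqr_ge0 //.
rewrite -[f x ^+ 2]real_normK ?num_real // -[g x ^+ 2]real_normK ?num_real //.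
have := sqr_ge0 (`|f x| - `|g x|); nra.
Qed.

Lemma L2D D f g : measurable D -> L2 D f -> L2 D g -> L2 D (fun x => f x + g x).
Proof.
move=> mD Lf Lg; split.
  by apply: measurable_realfun.measurable_funD; [case: Lf|case: Lg].
have Ifg := L2_integrableM mD Lf Lg; case: Lf Lg => _ If [_ Ig].
apply: (@eq_integrable _ _ _ (@leb2 R) D mD
    (EFin \o fun x => f x ^+ 2 + 2 * (f x * g x) + g x ^+ 2)).
  by move=> x _ /=; rewrite sqrrD mulr2n mulrDl mul1r.
by apply: integrableDR => //; apply: integrableDR => //; exact: integrableZR.
Qed.

(* The quadratic [s |-> ||s f + g||^2] is nonnegative, so its discriminant is not positive. *)
Lemma L2_Cauchy_Schwarz D f g : measurable D -> L2 D f -> L2 D g ->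
  `|rint D (fun x => f x * g x)| <= L2norm D f * L2norm D g.
Proof.
move=> mD Lf Lg; have Ifg := L2_integrableM mD Lf Lg.
have If := proj2 Lf; have Ig := proj2 Lg.
set A := rint D (fun x => f x ^+ 2); set B := rint D (fun x => g x ^+ 2).
set C := rint D (fun x => f x * g x).
have A_ge0 : 0 <= A by apply: Rintegral_ge0 => x _; exact: sqr_ge0.
have B_ge0 : 0 <= B by apply: Rintegral_ge0 => x _; exact: sqr_ge0.
have quadratic s :
    rint D (fun x => (s * f x + g x) ^+ 2) = s ^+ 2 * A + 2 * s * C + B.
  rewrite !rintE; transitivity (Rintegral (@leb2 R) D
      (fun x => s ^+ 2 * f x ^+ 2 + 2 * s * (f x * g x) + g x ^+ 2)).
    by apply: eq_Rintegral => x _; ring.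
  rewrite RintegralD //; last by apply: integrableDR => //; exact: integrableZR.
  by rewrite RintegralD ?RintegralZl //; exact: integrableZR.
have CAB : C ^+ 2 <= A * B.
  apply: discriminant_le0 => // s.
  have := @Rintegral_ge0 _ _ _ (@leb2 R) D (fun x => (s * f x + g x) ^+ 2).
  rewrite -rintE quadratic => /(_ (fun x _ => sqr_ge0 _)); lra.
rewrite /L2norm -/A -/B -sqrtrM // -sqrtr_sqr ler_sqrt //.
exact: mulr_ge0.
Qed.

End L2_space.

Section Velocity_norms.
Variable R : realType.
Implicit Types (D : set (pt R)) (U : 'I_2 -> pt R -> R) (DU : 'I_2 -> 'I_2 -> pt R -> R).
Local Notation integrable D f := ((@leb2 R).-integrable D (EFin \o f)).

Lemma sum_sqr_ge0 DU x : 0 <= \sum_(i < 2) \sum_(j < 2) DU i j x ^+ 2.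
Proof. by apply: sumr_ge0 => i _; apply: sumr_ge0 => j _; exact: sqr_ge0. Qed.

Lemma integrable_sum_sqr D DU : measurable D -> (forall i j, L2 D (DU i j)) ->
  integrable D (fun x => \sum_(i < 2) \sum_(j < 2) DU i j x ^+ 2).
Proof.
move=> mD LDU; apply: integrable_sumR => // i; apply: integrable_sumR => // j.
exact: proj2 (LDU i j).
Qed.

Lemma grad_norm_sqr D DU : grad_norm D DU ^+ 2 = rint D (gradprod DU DU).
Proof.
rewrite sqr_sqrtr; last by apply: Rintegral_ge0 => x _; exact: sum_sqr_ge0.
rewrite !rintE; apply: eq_Rintegral => x _.
by apply: eq_bigr => i _; apply: eq_bigr => j _; rewrite expr2.
Qed.

Lemma grad_norm_le_H1v_norm D U DU : measurable D ->
  (forall i, L2 D (U i)) -> (forall i j, L2 D (DU i j)) ->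
  grad_norm D DU <= H1v_norm D U DU.
Proof.
move=> mD LU LDU; rewrite /grad_norm /H1v_norm ler_sqrt; last first.
  by apply: Rintegral_ge0 => x _; rewrite addr_ge0 ?sum_sqr_ge0 ?sumr_ge0 // => i _; exact: sqr_ge0.
rewrite !rintE; apply: le_Rintegral => //; first exact: integrable_sum_sqr.
  apply: integrableDR => //; last exact: integrable_sum_sqr.
  by apply: integrable_sumR => // i; exact: proj2 (LU i).
by move=> x _; rewrite lerDr; apply: sumr_ge0 => i _; exact: sqr_ge0.
Qed.

Lemma rint_Omega_eps (L h H eps : R) (Ys : set (pt R)) (f : pt R -> R) : closed Ys ->
  integrable (Omega_eps L h H eps Ys) f ->
  rint (Omega_eps L h H eps Ys) f = rint (Omega_ff L h) f + rint (Omega_pm L H eps Ys) f.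
Proof.
move=> cYs If; have mF := measurable_Omega_ff L h; have mS := measurable_Sigma L.
have mFS : measurable (Omega_ff L h `|` Sigma L) by exact: measurableU.
have mE := measurable_Omega_eps L h H eps cYs; have mPm := measurable_Omega_pm L H eps cYs.
rewrite !rintE Rintegral_setU //; last first.
  apply/disj_set2P/seteqP; split => // x [[[_ /andP[x1 _]]|[_ x2]] [_ [/andP[_ x3] _]]].
    by move: (lt_trans x1 x3); rewrite ltxx.
  by move: x3; rewrite x2 ltxx.
rewrite Rintegral_setU //; last 2 first.
- by apply: integrableS If => // x FSx; left.
- apply/disj_set2P/seteqP; split => // x [[_ /andP[x1 _]] [_ x2]].
  by move: x1; rewrite x2 ltxx.
suff -> : Rintegral (@leb2 R) (Sigma L) f = 0 by rewrite addr0.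
have /integrableP[mf _] : integrable (Sigma L) f.
  by apply: integrableS If => // x Sx; left; right.
by rewrite /Rintegral null_set_integral //; exact: Sigma_null.
Qed.

(* The interface Sigma is a null set. *)
Lemma grad_norm_Omega_eps_le (L h H eps : R) (Ys : set (pt R)) DU : closed Ys ->
  (forall i j, L2 (Omega_eps L h H eps Ys) (DU i j)) ->
  grad_norm (Omega_eps L h H eps Ys) DU
    <= grad_norm (Omega_pm L H eps Ys) DU + grad_norm (Omega_ff L h) DU.
Proof.
move=> cYs LDU; rewrite /grad_norm rint_Omega_eps //.
  by rewrite addrC sqrtrD_le // Rintegral_ge0 // => x _; exact: sum_sqr_ge0.
by apply: integrable_sum_sqr => //; exact: measurable_Omega_eps.
Qed.

End Velocity_norms.

Theorem corollary3p5 (R : realType) (C1 C2 : R) :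
  exists C : R,
  forall (L h H eps : R) (Ys : set (pt R)) (N M : nat),
    0 < L -> 0 < h -> 0 < H -> 0 < eps <= 1 ->
    L = N%:R * eps -> H = M%:R * eps ->
    closed Ys -> Ys !=set0 ->
    (exists d : R, 0 < d /\
       Ys `<=` [set y | d <= y.1 <= 1 - d /\ d <= y.2 <= 1 - d]) ->
  forall (U : 'I_2 -> pt R -> R) (DU : 'I_2 -> 'I_2 -> pt R -> R) (P : pt R -> R),
    Vper L h H eps Ys U DU ->
    L2 (Omega_eps L h H eps Ys) P ->
    L2norm (Omega_eps L h H eps Ys) (divg DU) <= C1 * eps `^ (5 / 2) ->
    (forall (phi : 'I_2 -> pt R -> R) (Dphi : 'I_2 -> 'I_2 -> pt R -> R),
        Vper L h H eps Ys phi Dphi ->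
        `| rint (Omega_eps L h H eps Ys) (gradprod DU Dphi)
           - rint (Omega_eps L h H eps Ys) (fun x => P x * divg Dphi x) |
        <= C2 * eps `^ (3 / 2) *
           (grad_norm (Omega_eps L h H eps Ys) Dphi + H1v_norm (Omega_ff L h) phi Dphi)) ->
    grad_norm (Omega_eps L h H eps Ys) DU ^+ 2
      <= C * eps `^ (5 / 2) * L2norm (Omega_eps L h H eps Ys) P
         + C * eps `^ (3 / 2) *
           (grad_norm (Omega_pm L H eps Ys) DU + H1v_norm (Omega_ff L h) U DU).
Proof.
exists (`|C1| + 2 * `|C2|).
move=> L h H eps Ys N M _ _ _ _ _ _ cYs _ _ U DU P UV LP div_bound var_ineq.
set E := Omega_eps L h H eps Ys; set F := Omega_ff L h.
have mE : measurable E := measurable_Omega_eps L h H eps cYs.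
have mF : measurable F := measurable_Omega_ff L h.
have FE : F `<=` E by move=> x Fx; left; left.
have LU i : L2 E (U i) by case: (UV.1 i).
have LDU i j : L2 E (DU i j) by case: (UV.1 i).
apply: energy_bound; rewrite ?powR_ge0 ?sqrtr_ge0 //.
- by rewrite grad_norm_sqr; exact: le_trans (ler_norm _) (var_ineq U DU UV).
- apply: le_trans (L2_Cauchy_Schwarz mE LP (L2D mE (LDU _ _) (LDU _ _))) _.
  by rewrite mulrC ler_wpM2r ?sqrtr_ge0.
- apply: le_trans (grad_norm_Omega_eps_le cYs LDU) _; rewrite lerD2l.
  by apply: grad_norm_le_H1v_norm => // [i|i j]; apply: L2S FE _.
Qed.
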